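(* Let $X$ be a compact Hausdorff space and let $Y$ be a real inner product space with inner product $\langle\cdot,\cdot\rangle$ and norm $\|y\|=\langle y,y\rangle^{1/2}$. Let $C(X,Y)$ be the space of continuous functions $X\to Y$ with the uniform norm $|||f|||=\max_{x\in X}\|f(x)\|$, let $H\subset C(X,Y)$ be a linear subspace of finite dimension $n\ge1$, let $A$ be a compact Hausdorff space, and let $\{f_a\}_{a\in A}\subset C(X,Y)$ be such that $a\mapsto f_a$ is continuous from $A$ into $C(X,Y)$. Then $f^*\in H$ satisfies $\max_{a\in A}|||f_a-f^*|||\le\max_{a\in A}|||f_a-f|||$ for all $f\in H$ if and only if there exist an integer $k$ with $1\le k\le n+1$, elements $a_1,\dots,a_k\in A$, points $x_1,\dots,x_k\in X$, and positive numbers $\lambda_1,\dots,\lambda_k$ with $\sum_{i=1}^k\lambda_i=1$ such that (i') $\sum_{i=1}^k\lambda_i\langle f_{a_i}(x_i)-f^*(x_i),\, f(x_i)\rangle = 0$ for all $f\in H$; and (ii) $\|f_{a_i}(x_i)-f^*(x_i)\| = |||f_{a_i}-f^*||| = \max_{a\in A}|||f_a-f^*|||$ for all $i$ with $1\le i\le k$. *)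

From HB Require Import structures.
From mathcomp Require Import all_boot all_order all_algebra.
From mathcomp Require Import all_classical all_reals all_analysis.
Set Implicit Arguments. Unset Strict Implicit. Unset Printing Implicit Defensive.
Import Order.TTheory GRing.Theory Num.Theory.
Import numFieldNormedType.Exports.
Local Open Scope classical_set_scope.
Local Open Scope ring_scope.

Definition is_inner_product (R : realType) (Y : normedModType R)
  (ip : Y -> Y -> R) : Prop :=
  [/\ forall y z, ip y z = ip z y,
      forall (c : R) (y y' z : Y), ip (c *: y + y') z = c * ip y z + ip y' z,
      forall y, 0 <= ip y y
    & forall y, `|y| = Num.sqrt (ip y y)].

Definition unorm (R : realType) (X : Type) (Y : normedModType R)
  (f : X -> Y) : R := sup [set `|f x| | x in [set: X]].

Definition subspace_of_dim (R : realType) (X : topologicalType)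
  (Y : normedModType R) (H : set (X -> Y)) (n : nat) : Prop :=
  exists b : 'I_n -> X -> Y,
    [/\ forall i, continuous (b i),
        (forall c : 'I_n -> R, (forall x, \sum_(i < n) c i *: b i x = 0) ->
           forall i, c i = 0)
      & H = [set f | exists c : 'I_n -> R,
                f = (fun x => \sum_(i < n) c i *: b i x)]].

(* a |-> F a is continuous from A into (C(X,Y), |||.|||) *)
Definition unif_continuous_family (R : realType) (A X : topologicalType)
  (Y : normedModType R) (F : A -> X -> Y) : Prop :=
  (forall a, continuous (F a)) /\
  forall a (e : R), 0 < e -> \forall b \near a, forall x, `|F b x - F a x| < e.

Definition max_dev (R : realType) (A X : Type) (Y : normedModType R)
  (F : A -> X -> Y) (g : X -> Y) : R :=
  sup [set unorm (fun x => F a x - g x) | a in [set: A]].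

From HB Require Import structures.
From mathcomp Require Import all_boot all_order all_algebra.
From mathcomp Require Import all_classical all_reals all_analysis.
From mathcomp Require Import ring lra.
Set Implicit Arguments. Unset Strict Implicit. Unset Printing Implicit Defensive.
Import Order.TTheory GRing.Theory Num.Theory.
Import numFieldNormedType.Exports.
Local Open Scope classical_set_scope.
Local Open Scope ring_scope.

(* Sufficiency: if some [f] in [H] had a smaller maximal deviation, then
   [h := fs - f] would satisfy [ip (e i) (h (x i)) < 0] at every extremal pair
   [(a i, x i)], where [e i := F (a i) (x i) - fs (x i)], because [e i + h (x i)]
   is shorter than [e i]; the weighted sum of these terms cannot vanish.
   Necessity: on the compact set [K] of extremal pairs [p = (a, x)] consider
   [v p := (ip (e p) (b j x))_j] in [R^n], for a basis [b] of [H].  Minimising the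
   squared length of a convex combination of [n.+1] values of [v] over [K] (a
   compact problem, by Tychonoff) gives either [0], which is the required
   relation, or a vector [w] with [\sum_j w j * v p j >= |w|^2 > 0] on [K]; the
   minimiser stays optimal against adding a new point of [K] because, by
   Carathéodory, [n.+1] points suffice in [R^n].  In the second case
   [fs + t \sum_j w j *: b j] beats [fs] for small [t > 0]. *)

Lemma exists_nontrivial_relation (K : fieldType) m p (w : 'I_m -> 'I_p -> K) :
  (p < m)%N ->
  exists2 mu : 'I_m -> K, exists i, mu i != 0 & forall j, \sum_i mu i * w i j = 0.
Proof.
move=> ltpm; pose M : 'M[K]_(m, p) := \matrix_(i, j) w i j.
have /rowV0Pn[v /sub_kermxP vM /rV0Pn[i vi]] : kermx M != 0.
  by rewrite -mxrank_eq0 mxrank_ker -lt0n subn_gt0 (leq_ltn_trans (rank_leq_col M)).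
exists (v 0); first by exists i.
move=> j; have /matrixP/(_ 0 j) := vM; rewrite !mxE => vMj.
by rewrite -[RHS]vMj; apply: eq_bigr => k _; rewrite mxE.
Qed.

(* The relation [mu] among the vectors [(u i, 1)] shifts weight from [lam]
   without moving its barycentre; shift until the first weight vanishes. *)
Lemma caratheodory_zero_weight (R : realFieldType) n N (lam : 'I_N -> R)
    (u : 'I_N -> 'I_n -> R) :
  (n.+1 < N)%N -> (forall i, 0 <= lam i) -> \sum_i lam i = 1 ->
  exists lam' : 'I_N -> R, [/\ forall i, 0 <= lam' i, \sum_i lam' i = 1,
    forall j, \sum_i lam' i * u i j = \sum_i lam i * u i j
    & exists i, lam' i = 0].
Proof.
move=> ltnN lam_ge0 lam1.
pose w i (j : 'I_n.+1) := if unlift ord_max j is Some j' then u i j' else 1.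
have [mu [i1 mu_i1] mu_rel] := exists_nontrivial_relation w ltnN.
have mu_sum : \sum_i mu i = 0.
  by have := mu_rel ord_max; rewrite /w unlift_none; under eq_bigr do rewrite mulr1.
have mu_u j : \sum_i mu i * u i j = 0.
  by have := mu_rel (lift ord_max j); rewrite /w liftK.
have [i2 mu_i2] : exists i, 0 < mu i.
  apply/not_existsP => mu_le0; move/eqP: mu_i1; apply.
  have Nmu_ge0 i : 0 <= - mu i by rewrite oppr_ge0 leNgt; apply/negP/mu_le0.
  have Nmu_sum : \sum_i - mu i = 0 by rewrite sumrN mu_sum oppr0.
  by apply/oppr_inj; rewrite oppr0 (psumr_eq0P (fun i _ => Nmu_ge0 i) Nmu_sum).
case: (@arg_minP _ R _ i2 (fun i => 0 < mu i) (fun i => lam i / mu i)) => //.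
move=> j0 mu_j0 j0_min.
pose t := lam j0 / mu j0.
exists (fun i => lam i - t * mu i); split.
- move=> i; rewrite subr_ge0; case: (ltrP 0 (mu i)) => mu_i.
    by rewrite -ler_pdivlMr //; exact: j0_min.
  by apply: le_trans (lam_ge0 i); rewrite mulr_ge0_le0 // divr_ge0 // ltW.
- by rewrite sumrB -mulr_sumr mu_sum mulr0 subr0.
- move=> j; under eq_bigr do rewrite mulrBl -mulrA.
  by rewrite sumrB -mulr_sumr mu_u mulr0 subr0.
- by exists j0; rewrite /t divfK ?subrr // gt_eqF.
Qed.

Lemma reindex_positive_weights (R : numDomainType) m (lam : 'I_m -> R) :
  (forall i, 0 <= lam i) -> \sum_i lam i = 1 ->
  exists k (s : 'I_k -> 'I_m), [/\ (0 < k <= m)%N, forall i, 0 < lam (s i)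
    & forall G : 'I_m -> R,
        \sum_(i < k) lam (s i) * G (s i) = \sum_i lam i * G i].
Proof.
move=> lam_ge0 lam1; pose P := [pred i | 0 < lam i].
have reindex (G : 'I_m -> R) :
    \sum_(i < #|P|) lam (enum_val i) * G (enum_val i) = \sum_i lam i * G i.
  rewrite -(big_enum_val (A := P) (fun i => lam i * G i)) [RHS](bigID P) /=.
  rewrite [X in _ = _ + X]big1 ?addr0 // => i.
  by rewrite lt_def lam_ge0 andbT negbK => /eqP ->; rewrite mul0r.
exists #|P|, enum_val; split => //; last exact: enum_valP.
rewrite (leq_trans (max_card P)) ?card_ord // andbT; apply/card_gt0P.
apply/not_existsP => lam_le0; move/eqP: (@oner_neq0 R); apply.
rewrite -lam1 big1 // => i _; apply/eqP/negP => lam_neq0; apply: (lam_le0 i).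
by rewrite inE /= lt_def lam_ge0 andbT; apply/negP.
Qed.

Lemma ge0_of_affine_ge0 (R : realFieldType) (a c : R) : 0 <= c ->
  (forall t, 0 < t <= 1 -> 0 <= 2 * a + t * c) -> 0 <= a.
Proof.
move=> c_ge0 affine_ge0; rewrite leNgt; apply/negP => a_lt0.
have ca_gt0 : 0 < c - a by lra.
pose t := - a / (c - a).
have tca : t * (c - a) = - a by rewrite /t divfK // gt_eqF.
have t_gt0 : 0 < t by rewrite divr_gt0 // oppr_gt0.
have t_le1 : t <= 1 by rewrite /t ler_pdivrMr // mul1r; lra.
have := affine_ge0 t; rewrite t_gt0 t_le1 => /(_ isT); nra.
Qed.

(* Far from the set [phi <= delta/2] the linear term [- 2 t phi] wins over the
   quadratic one; on it, the gap [m < E] absorbs both when [t] is small. *)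
Lemma uniform_descent_step (R : realFieldType) (E m P G delta : R) :
  m < E -> 0 < delta -> 0 <= P -> 0 <= G ->
  exists t M, [/\ 0 < t, M < E & forall u phi c, u <= E -> 0 <= c <= G ->
    `|phi| <= P -> (phi <= delta / 2 -> u <= m) ->
    u - 2 * t * phi + t ^+ 2 * c <= M].
Proof.
move=> mE delta_gt0 P_ge0 G_ge0.
pose t := Num.min 1 (Num.min (delta / (2 * (G + 1)))
                             ((E - m) / (2 * (2 * P + G + 1)))).
have t_gt0 : 0 < t.
  by rewrite !lt_min ltr01 !divr_gt0 ?subr_gt0 ?mulr_gt0 //; lra.
have t_le1 : t <= 1 by rewrite ge_min lexx.
have tG : t * (2 * (G + 1)) <= delta.
  by rewrite -ler_pdivlMr ?mulr_gt0 ?ltr_wpDl // !ge_min lexx orbT.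
have tP : t * (2 * (2 * P + G + 1)) <= E - m.
  rewrite -ler_pdivlMr ?mulr_gt0 ?ltr_wpDl ?addr_ge0 ?mulr_ge0 //.
  by rewrite !ge_min lexx !orbT.
exists t, (Num.max (E - t * delta / 2) (m + t * (2 * P + G))); split => //.
  rewrite gt_max; apply/andP; split; nra.
move=> u phi c uE /andP[c_ge0 cG] phiP near_m; rewrite le_max.
have [phi_small|phi_large] := lerP phi (delta / 2).
  have /ler_normlW : `|- phi| <= P by rewrite normrN.
  move=> phiNP; apply/orP; right; have := near_m phi_small.
  have : 0 <= t * (P + phi) by rewrite mulr_ge0 //; lra.
  have : 0 <= t * ((1 - t) * c) by rewrite !mulr_ge0 //; lra.
  have : 0 <= t * (G - c) by rewrite mulr_ge0 //; lra.
  nra.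
by apply/orP; left; nra.
Qed.

Lemma continuous_compact_max (T : topologicalType) (R : realType) (S : set T)
    (h : T -> R) :
  S !=set0 -> compact S -> continuous h ->
  exists2 c, S c & forall t, S t -> h t <= h c.
Proof.
move=> S0 cS ch.
have [c Sc c_max] := compact_EVT_max S0 cS (continuous_subspaceT (A := S) ch).
by exists c; [rewrite inE in Sc | move=> t St; apply: c_max; rewrite inE].
Qed.

Lemma continuous_compact_min (T : topologicalType) (R : realType) (S : set T)
    (h : T -> R) :
  S !=set0 -> compact S -> continuous h ->
  exists2 c, S c & forall t, S t -> h c <= h t.
Proof.
move=> S0 cS ch.
have [c Sc c_min] := compact_EVT_min S0 cS (continuous_subspaceT (A := S) ch).
by exists c; [rewrite inE in Sc | move=> t St; apply: c_min; rewrite inE].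
Qed.

Lemma continuous_compact_ub (T : topologicalType) (R : realType) (h : T -> R) :
  compact [set: T] -> continuous h -> exists M, forall t, h t <= M.
Proof.
move=> cT ch; have [[t0 _]|T0] := pselect ([set: T] !=set0).
  have [c _ c_max] := continuous_compact_max (ex_intro _ t0 I) cT ch.
  by exists (h c) => t; apply: c_max.
by exists 0 => t; exfalso; apply: T0; exists t.
Qed.

Lemma continuous_compact_gap (T : topologicalType) (R : realType) (S : set T)
    (u : T -> R) (E : R) :
  compact S -> continuous u -> (forall p, S p -> u p < E) ->
  exists2 m, m < E & forall p, S p -> u p <= m.
Proof.
move=> cS cu uE; have [S0|S0] := pselect (S !=set0).
  have [c Sc c_max] := continuous_compact_max S0 cS cu.
  by exists (u c) => //; apply: uE.
by exists (E - 1) => [|p Sp]; [lra | exfalso; apply: S0; exists p].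
Qed.

Lemma continuous_sumr (K : numFieldType) (V : normedModType K)
    (T : topologicalType) (I : Type) (r : seq I) (h : I -> T -> V) :
  (forall i, continuous (h i)) -> continuous (fun t => \sum_(i <- r) h i t).
Proof.
move=> ch t; elim: r => [|i r IHr].
  by under eq_fun do rewrite big_nil; exact: cvg_cst.
by under eq_fun do rewrite big_cons; apply: cvgD; [exact: ch|].
Qed.

Lemma unif_continuous_family_joint (R : realType) (A X : topologicalType)
    (Y : normedModType R) (F : A -> X -> Y) :
  unif_continuous_family F -> continuous (fun p : A * X => F p.1 p.2).
Proof.
move=> [cFa cF] [a0 x0]; apply/cvgrPdist_lt => e e_gt0.
have e2_gt0 : 0 < e / 2 by rewrite divr_gt0.
have near_x0 : \forall x \near x0, `|F a0 x0 - F a0 x| < e / 2.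
  exact: (cvgrPdist_lt _ _).1 (cFa a0 x0) _ e2_gt0.
exists ([set a | forall x, `|F a x - F a0 x| < e / 2],
        [set x | `|F a0 x0 - F a0 x| < e / 2]); first by split; [exact: cF|].
move=> [a x] /= [near_a near_x].
rewrite (le_lt_trans (ler_distD (F a0 x) _ _)) // (splitr e) ltrD //.
by rewrite distrC.
Qed.

Section InnerProduct.
Variables (R : realType) (Y : normedModType R) (ip : Y -> Y -> R).
Hypothesis ip_inner : is_inner_product ip.

Lemma ipC y z : ip y z = ip z y.
Proof. by case: ip_inner. Qed.

Lemma ipDl y y' z : ip (y + y') z = ip y z + ip y' z.
Proof. by case: ip_inner => _ lin _ _; rewrite -[y in LHS]scale1r lin mul1r. Qed.

Lemma ipZl c y z : ip (c *: y) z = c * ip y z.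
Proof.
case: ip_inner => _ lin _ _.
have ip0 : ip 0 z = 0 by apply/(addrI (ip 0 z)); rewrite -ipDl !addr0.
by rewrite -[_ *: _]addr0 lin ip0 addr0.
Qed.

Lemma ipDr y z z' : ip y (z + z') = ip y z + ip y z'.
Proof. by rewrite ipC ipDl !(ipC y). Qed.

Lemma ipZr c y z : ip y (c *: z) = c * ip y z.
Proof. by rewrite ipC ipZl ipC. Qed.

Lemma ipNr y z : ip y (- z) = - ip y z.
Proof. by rewrite -scaleN1r ipZr mulN1r. Qed.

Lemma ip_sumr I (r : seq I) (c : I -> R) (z : I -> Y) y :
  ip y (\sum_(i <- r) c i *: z i) = \sum_(i <- r) c i * ip y (z i).
Proof.
elim: r => [|i r IHr]; last by rewrite !big_cons ipDr ipZr IHr.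
by rewrite !big_nil -(scale0r 0) ipZr mul0r.
Qed.

Lemma sqr_norm_ip y : `|y| ^+ 2 = ip y y.
Proof. by case: ip_inner => _ _ ip_ge0 ->; rewrite sqr_sqrtr. Qed.

Lemma sqr_normD y z : `|y + z| ^+ 2 = `|y| ^+ 2 + 2 * ip y z + `|z| ^+ 2.
Proof. by rewrite !sqr_norm_ip ipDl !ipDr (ipC z y); ring. Qed.

Lemma sqr_normB_scale y z t :
  `|y - t *: z| ^+ 2 = `|y| ^+ 2 - 2 * t * ip y z + t ^+ 2 * `|z| ^+ 2.
Proof.
rewrite sqr_normD ipNr ipZr normrN normrZ exprMn real_normK ?num_real //.
by ring.
Qed.

Lemma continuous_ip (T : topologicalType) (f g : T -> Y) :
  continuous f -> continuous g -> continuous (fun t => ip (f t) (g t)).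
Proof.
move=> cf cg t.
have polarization s : ip (f s) (g s) = (`|f s + g s| ^+ 2 - `|f s - g s| ^+ 2) / 4.
  by rewrite !sqr_normD ipNr normrN; field.
rewrite (funext polarization).
have cnorm (h : T -> Y) :
    {for t, continuous h} -> {for t, continuous (fun s => `|h s| ^+ 2)}.
  move=> ch; apply: continuous_comp (@exprn_continuous _ 2 _).
  exact: continuous_comp ch (@norm_continuous _ _ _).
apply: cvgM; last exact: cvg_cst.
by apply: cvgB; apply: cnorm; [apply: cvgD | apply: cvgB];
  [exact: cf | exact: cg | exact: cf | exact: cg].
Qed.

End InnerProduct.

Section UniformDeviation.
Variables (R : realType) (A X : Type) (Y : normedModType R).

Lemma ler_unorm (f : X -> Y) (M : R) x :
  (forall y, `|f y| <= M) -> `|f x| <= unorm f.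
Proof.
move=> fM; apply: sup_upper_bound; last by exists x.
by split; [exists `|f x|, x | exists M => _ [y _ <-]].
Qed.

Lemma unorm_le (f : X -> Y) (r : R) (x0 : X) :
  (forall y, `|f y| <= r) -> unorm f <= r.
Proof. by move=> fr; apply: ge_sup => [|_ [y _ <-]]; [exists `|f x0|, x0 |]. Qed.

Lemma unorm_le_max_dev (F : A -> X -> Y) (g : X -> Y) (M : R) (x0 : X) a :
  (forall a x, `|F a x - g x| <= M) -> unorm (fun x => F a x - g x) <= max_dev F g.
Proof.
move=> FgM; apply: sup_upper_bound; last by exists a.
split; first by exists (unorm (fun x => F a x - g x)), a.
by exists M => _ [b _ <-]; apply: unorm_le x0 _.
Qed.

Lemma max_dev_le (F : A -> X -> Y) (g : X -> Y) (r : R) (a0 : A) (x0 : X) :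
  (forall a x, `|F a x - g x| <= r) -> max_dev F g <= r.
Proof.
move=> Fgr; apply: ge_sup => [|_ [a _ <-]].
  by exists (unorm (fun x => F a0 x - g x)), a0.
exact: unorm_le x0 _.
Qed.

End UniformDeviation.

Lemma sum_sqr_lerp (R : comPzRingType) m (w u : 'I_m -> R) (t : R) :
  \sum_(j < m) ((1 - t) * w j + t * u j) ^+ 2 =
  \sum_(j < m) w j ^+ 2 + t * (2 * \sum_(j < m) w j * (u j - w j)
                               + t * \sum_(j < m) (u j - w j) ^+ 2).
Proof.
rewrite (eq_bigr (fun j => w j ^+ 2 + t * (2 * (w j * (u j - w j))
                                          + t * (u j - w j) ^+ 2))).
  by rewrite big_split /= -mulr_sumr big_split /= -!mulr_sumr.
by move=> j _; ring.
Qed.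

Section HullAlternative.
Variables (R : realType) (T : topologicalType) (K : set T) (n : nat).
Variable v : T -> 'I_n -> R.
Hypotheses (K_compact : compact K) (K_nonempty : K !=set0)
  (v_continuous : forall j, continuous (v ^~ j)).

(* [z : Z] encodes the combination of the points [(z i).2] with weights
   [(z i).1]. *)
Local Notation Z := (prod_topology (fun _ : 'I_n.+1 => (R * T)%type)).

Let bary (z : Z) j := \sum_i (z i).1 * v (z i).2 j.

Let dist2 (z : Z) := \sum_j bary z j ^+ 2.

Let simplex := [set z : Z | forall i, (`[0, 1] `*` K) (z i)]
                 `&` [set z : Z | \sum_i (z i).1 = 1].

Let weight_continuous i : continuous (fun z : Z => (z i).1).
Proof.
move=> z; apply: (continuous_comp (f := fun z : Z => z i)); last exact: cvg_fst.
exact: proj_continuous.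
Qed.

Let point_continuous i : continuous (fun z : Z => (z i).2).
Proof.
move=> z; apply: (continuous_comp (f := fun z : Z => z i)); last exact: cvg_snd.
exact: proj_continuous.
Qed.

Lemma simplexP z : simplex z <->
  [/\ forall i, 0 <= (z i).1, \sum_i (z i).1 = 1 & forall i, K (z i).2].
Proof.
split=> [[z01 z1]|[z_ge0 z1 zK]].
  split=> // i; have [zi01 ziK] := z01 i => //.
  by move: zi01; rewrite /= in_itv /= => /andP[].
split=> // i; split=> //=; rewrite in_itv /= z_ge0 /= -z1 (bigD1 i) //= lerDl.
by apply: sumr_ge0 => k _.
Qed.

Lemma simplex_compact : compact simplex.
Proof.
apply: compact_closedI.
  exact: tychonoff (fun _ => compact_setX (@segment_compact R 0 1) K_compact).
apply: (continuous_closedP _).1 (closed_eq (y := 1)).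
exact: continuous_sumr weight_continuous.
Qed.

Lemma dist2_continuous : continuous dist2.
Proof.
apply: continuous_sumr => j z.
apply: (continuous_comp (f := bary^~ j) (g := fun r : R => r ^+ 2));
  last exact: exprn_continuous.
apply: continuous_sumr => {z} i z.
apply: (continuousM (s := fun z : Z => (z i).1) (t := fun z : Z => v (z i).2 j)).
  exact: weight_continuous.
apply: (continuous_comp (f := fun z : Z => (z i).2) (g := v^~ j)).
  exact: point_continuous.
exact: v_continuous.
Qed.

(* Carathéodory keeps [(1 - t) z + t p] inside the simplex on [n.+1] points. *)
Lemma simplex_lerp z p t : simplex z -> K p -> 0 < t <= 1 ->
  exists2 z', simplex z' & forall j, bary z' j = (1 - t) * bary z j + t * v p j.
Proof.
move=> /simplexP[z_ge0 z1 zK] Kp /andP[t_gt0 t_le1].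
pose lam (i : 'I_n.+2) :=
  if unlift ord_max i is Some i' then (1 - t) * (z i').1 else t.
pose pts (i : 'I_n.+2) := if unlift ord_max i is Some i' then (z i').2 else p.
have lam_ge0 i : 0 <= lam i.
  by rewrite /lam; case: unlift => [i'|]; [apply: mulr_ge0 => //; lra | lra].
have lam1 : \sum_i lam i = 1.
  rewrite (bigD1_ord ord_max) //= /lam unlift_none.
  by under eq_bigr do rewrite liftK; rewrite -mulr_sumr z1; ring.
have lam_bary j : \sum_i lam i * v (pts i) j = (1 - t) * bary z j + t * v p j.
  rewrite (bigD1_ord ord_max) //= /lam /pts unlift_none.
  under eq_bigr do rewrite liftK.
  by rewrite mulr_sumr addrC; congr (_ + _); apply: eq_bigr => i _; ring.
have [lam' [lam'_ge0 lam'1 lam'_bary [j0 lam'_j0]]] :=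
  caratheodory_zero_weight (fun i j => v (pts i) j) (ltnSn n.+1) lam_ge0 lam1.
exists (fun i => (lam' (lift j0 i), pts (lift j0 i))).
  apply/simplexP; split=> [i|| i] /=; first exact: lam'_ge0.
    by rewrite -lam'1 [RHS](bigD1_ord j0) //= lam'_j0 add0r.
  by rewrite /pts; case: unlift.
move=> j; rewrite -lam_bary -lam'_bary [RHS](bigD1_ord j0) //=.
by rewrite lam'_j0 mul0r add0r.
Qed.

Lemma dist2_min_first_order zs :
  simplex zs -> (forall z, simplex z -> dist2 zs <= dist2 z) ->
  forall p, K p -> 0 <= \sum_j bary zs j * (v p j - bary zs j).
Proof.
move=> zs_simplex zs_min p Kp.
apply: (ge0_of_affine_ge0 (c := \sum_j (v p j - bary zs j) ^+ 2)).
  by apply: sumr_ge0 => j _; exact: sqr_ge0.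
move=> t t01; have [z' z'_simplex z'_bary] := simplex_lerp zs_simplex Kp t01.
have := zs_min z' z'_simplex; rewrite /dist2.
under [X in _ <= X]eq_bigr do rewrite z'_bary.
by rewrite sum_sqr_lerp lerDl pmulr_rge0 //; case/andP: t01.
Qed.

Lemma hull_zero_or_separated :
  (exists2 w : 'I_n -> R, 0 < \sum_j w j ^+ 2 &
     forall p, K p -> \sum_j w j ^+ 2 <= \sum_j w j * v p j)
  \/ exists (lam : 'I_n.+1 -> R) (p : 'I_n.+1 -> T),
     [/\ forall i, 0 <= lam i, \sum_i lam i = 1, forall i, K (p i)
       & forall j, \sum_i lam i * v (p i) j = 0].
Proof.
have [p0 Kp0] := K_nonempty.
pose z0 : Z := fun i => ((i == ord0)%:R, p0).
have z0_simplex : simplex z0.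
  apply/simplexP; split=> [i||//]; first by rewrite ler0n.
  by rewrite (bigD1 ord0) //= big1 ?addr0 // => i /negbTE ->.
have [zs zs_simplex zs_min] := continuous_compact_min
  (ex_intro _ z0 z0_simplex) simplex_compact dist2_continuous.
have [dist_gt0|dist_le0] := ltrP 0 (dist2 zs).
  left; exists (bary zs) => // p Kp.
  have := dist2_min_first_order zs_simplex zs_min Kp.
  by under eq_bigr do rewrite mulrBr -expr2; rewrite sumrB subr_ge0.
right; have /simplexP[zs_ge0 zs1 zsK] := zs_simplex.
exists (fun i => (zs i).1), (fun i => (zs i).2); split=> // j.
have bary_sqr_ge0 j' : xpredT j' -> 0 <= bary zs j' ^+ 2 by move=> _; exact: sqr_ge0.
have dist0 : dist2 zs = 0 by apply/le_anti; rewrite dist_le0 sumr_ge0.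
apply/eqP; rewrite -sqrf_eq0; apply/eqP.
exact: psumr_eq0P bary_sqr_ge0 dist0 j isT.
Qed.

End HullAlternative.

Lemma free_family_domain_nonempty (R : nzRingType) (X : Type) (Y : lmodType R)
    n (b : 'I_n -> X -> Y) :
  (0 < n)%N ->
  (forall c : 'I_n -> R, (forall x, \sum_i c i *: b i x = 0) -> forall i, c i = 0) ->
  [set: X] !=set0.
Proof.
move=> n_gt0 b_free; apply/not_existsP => X0; move/eqP: (@oner_neq0 R); apply.
by apply: (b_free (fun=> 1) _ (Ordinal n_gt0)) => x; exfalso; apply: (X0 x).
Qed.

Section BestApproximation.
Variables (R : realType) (X : topologicalType) (Y : normedModType R).
Variables (ip : Y -> Y -> R) (H : set (X -> Y)) (n : nat) (b : 'I_n -> X -> Y).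
Variables (A : topologicalType) (F : A -> X -> Y) (fs : X -> Y) (a0 : A) (x0 : X).
Hypotheses (X_compact : compact [set: X]) (A_compact : compact [set: A]).
Hypotheses (ip_inner : is_inner_product ip) (F_continuous : unif_continuous_family F).
Hypotheses (b_continuous : forall i, continuous (b i))
  (H_span : H = [set f | exists c : 'I_n -> R,
                  f = (fun x => \sum_(i < n) c i *: b i x)])
  (fs_in_H : H fs).

Let AX_compact : compact [set: A * X].
Proof. by rewrite -setXTT; exact: compact_setX. Qed.

Lemma H_continuous f : H f -> continuous f.
Proof.
rewrite H_span => -[c ->]; apply: continuous_sumr => i x.
by apply: cvgZ; [exact: cvg_cst | exact: b_continuous].
Qed.

Lemma H_addZ (t : R) f g : H f -> H g -> H (fun x => f x + t *: g x).
Proof.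
rewrite H_span => -[c ->] [d ->]; exists (fun i => c i + t * d i).
apply: boolp.funext => x; rewrite scaler_sumr -big_split /=.
by apply: eq_bigr => i _; rewrite scalerDl scalerA.
Qed.

Lemma continuous_dev g : continuous g ->
  continuous (fun p : A * X => F p.1 p.2 - g p.2).
Proof.
move=> g_cont p; apply: cvgB; first exact: unif_continuous_family_joint.
exact: (continuous_comp (f := snd)) cvg_snd (g_cont _).
Qed.

Lemma dev_bounded g : continuous g -> exists M, forall a x, `|F a x - g x| <= M.
Proof.
move=> /continuous_dev dev_cont.
have [M HM] := continuous_compact_ub AX_compact
  (fun p => continuous_comp (dev_cont p) (@norm_continuous _ _ _)).
by exists M => a x; exact: (HM (a, x)).
Qed.

Lemma norm_dev_le_unorm g a x : continuous g ->
  `|F a x - g x| <= unorm (fun y => F a y - g y).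
Proof. by move=> /dev_bounded[M HM]; exact: ler_unorm (HM a). Qed.

Lemma unorm_dev_le_max_dev g a : continuous g ->
  unorm (fun y => F a y - g y) <= max_dev F g.
Proof. by move=> /dev_bounded[M HM]; exact: unorm_le_max_dev x0 _ HM. Qed.

Lemma norm_dev_le_max_dev g a x : H g -> `|F a x - g x| <= max_dev F g.
Proof.
move=> /H_continuous g_cont.
exact: le_trans (norm_dev_le_unorm a x g_cont) (unorm_dev_le_max_dev a g_cont).
Qed.

Let dev (p : A * X) := F p.1 p.2 - fs p.2.

Let extremal := [set p : A * X | `|dev p| = max_dev F fs].

Let continuous_norm_dev : continuous (fun p => `|dev p|).
Proof.
exact: (fun p => continuous_comp (continuous_dev (H_continuous fs_in_H) (x := p))
                   (@norm_continuous _ _ _)).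
Qed.

Let continuous_ip_dev g : continuous g ->
  continuous (fun p : A * X => ip (dev p) (g p.2)).
Proof.
move=> g_cont; have g2_cont : continuous (fun p : A * X => g p.2).
  by move=> p; apply: (continuous_comp (f := snd)); [exact: cvg_snd | exact: g_cont].
exact: (continuous_ip ip_inner (f := dev) (continuous_dev (H_continuous fs_in_H))
                                g2_cont).
Qed.

Lemma extremal_nonempty : extremal !=set0.
Proof.
have [c _ c_max] := continuous_compact_max (ex_intro _ (a0, x0) I) AX_compact
  continuous_norm_dev.
exists c; apply/le_anti; rewrite norm_dev_le_max_dev //=.
by apply: max_dev_le a0 x0 _ => a x; exact: (c_max (a, x)).
Qed.

Lemma extremal_compact : compact extremal.
Proof.
rewrite -(setTI extremal); apply: compact_closedI AX_compact _.
have closed_E : closed [set r : R | r = max_dev F fs] by exact: closed_eq.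
exact: (continuous_closedP _).1 continuous_norm_dev _ closed_E.
Qed.

Lemma extremal_attains p : extremal p ->
  `|F p.1 p.2 - fs p.2| = unorm (fun y => F p.1 y - fs y) /\
  unorm (fun y => F p.1 y - fs y) = max_dev F fs.
Proof.
rewrite /extremal /dev /= => p_max; have fs_cont := H_continuous fs_in_H.
have le1 := norm_dev_le_unorm p.1 p.2 fs_cont.
have le2 := unorm_dev_le_max_dev p.1 fs_cont.
by split; apply/le_anti; rewrite ?le1 ?le2 -?p_max ?(le_trans le1) ?p_max.
Qed.

Lemma le_max_dev_of_orthogonal k (a : 'I_k -> A) (x : 'I_k -> X) (lam : 'I_k -> R) :
  (0 < k)%N -> (forall i, 0 < lam i) ->
  (forall f, H f ->
     \sum_(i < k) lam i * ip (F (a i) (x i) - fs (x i)) (f (x i)) = 0) ->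
  (forall i, `|F (a i) (x i) - fs (x i)| = max_dev F fs) ->
  forall f, H f -> max_dev F fs <= max_dev F f.
Proof.
move=> k_gt0 lam_gt0 orthogonal attains f Hf.
rewrite leNgt; apply/negP => f_better.
pose h x := fs x + (-1) *: f x.
have term_lt0 i : lam i * ip (F (a i) (x i) - fs (x i)) (h (x i)) < 0.
  rewrite pmulr_rlt0 //; set e := F (a i) (x i) - fs (x i).
  have e_h : e + h (x i) = F (a i) (x i) - f (x i).
    by rewrite /e /h scaleN1r addrA subrK.
  have f_close := norm_dev_le_max_dev (a i) (x i) Hf.
  have := sqr_normD ip_inner e (h (x i)); rewrite e_h attains.
  have := normr_ge0 (F (a i) (x i) - f (x i)); have := sqr_ge0 `|h (x i)|.
  by nra.
have sum0 : \sum_(i < k) - (lam i * ip (F (a i) (x i) - fs (x i)) (h (x i))) = 0.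
  by rewrite sumrN orthogonal ?oppr0 //; exact: H_addZ.
have term_ge0 i :
    xpredT i -> 0 <= - (lam i * ip (F (a i) (x i) - fs (x i)) (h (x i))).
  by rewrite oppr_ge0 ltW.
have /eqP := psumr_eq0P term_ge0 sum0 (i := Ordinal k_gt0) isT.
by rewrite oppr_eq0 lt_eqF.
Qed.

Lemma sqr_dev_gap g delta : H g -> 0 < delta ->
  (forall p, extremal p -> delta <= ip (dev p) (g p.2)) ->
  exists2 m, m < max_dev F fs ^+ 2 &
    forall p, ip (dev p) (g p.2) <= delta / 2 -> `|dev p| ^+ 2 <= m.
Proof.
move=> Hg delta_gt0 g_ascent; pose phi p := ip (dev p) (g p.2).
have dev_le p : `|dev p| <= max_dev F fs by exact: norm_dev_le_max_dev.
have small_compact : compact [set p | phi p <= delta / 2].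
  rewrite -(setTI [set p | phi p <= delta / 2]); apply: compact_closedI AX_compact _.
  have closed_small : closed [set r : R | r <= delta / 2] by exact: closed_le.
  exact: (continuous_closedP _).1 (continuous_ip_dev (H_continuous Hg)) _ closed_small.
apply: (continuous_compact_gap small_compact
  (fun p => continuous_comp (continuous_norm_dev (x := p)) (@exprn_continuous _ 2 _))).
move=> p /= phi_small; rewrite ltr_pXn2r ?nnegrE ?(le_trans _ (dev_le p)) //.
rewrite lt_neqAle dev_le andbT; apply/eqP => p_max.
by have := g_ascent p p_max; rewrite -/(phi p); lra.
Qed.

Lemma max_dev_descent g delta : H g -> 0 < delta ->
  (forall p, extremal p -> delta <= ip (dev p) (g p.2)) ->
  exists2 f, H f & max_dev F f < max_dev F fs.
Proof.
move=> Hg delta_gt0 g_ascent; set E := max_dev F fs.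
have g_cont := H_continuous Hg.
have [P phiP] := continuous_compact_ub AX_compact
  (fun p => continuous_comp (continuous_ip_dev g_cont (x := p)) (@norm_continuous _ _ _)).
have [G gG] := continuous_compact_ub X_compact
  (fun x => continuous_comp (continuous_comp (g_cont x) (@norm_continuous _ _ _))
                            (@exprn_continuous _ 2 _)).
have dev_le p : `|dev p| <= E by exact: norm_dev_le_max_dev.
have [m mE near_m] := sqr_dev_gap Hg delta_gt0 g_ascent.
have [t [M [t_gt0 ME step_le]]] := uniform_descent_step mE delta_gt0
  (le_trans (normr_ge0 _) (phiP (a0, x0))) (le_trans (sqr_ge0 _) (gG x0)).
have dev_step a x : `|F a x - (fs x + t *: g x)| ^+ 2 <= M.
  have -> : F a x - (fs x + t *: g x) = dev (a, x) - t *: g x.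
    by rewrite /dev /= opprD addrA.
  rewrite (sqr_normB_scale ip_inner); apply: step_le => //; last exact: near_m.
  - by rewrite ler_pXn2r ?nnegrE ?dev_le // (le_trans _ (dev_le (a, x))).
  - by rewrite sqr_ge0 gG.
  - exact: phiP.
have M_ge0 : 0 <= M by apply: le_trans (dev_step a0 x0); exact: sqr_ge0.
exists (fun x => fs x + t *: g x); first exact: H_addZ.
apply: (@le_lt_trans _ _ (Num.sqrt M)).
  apply: max_dev_le a0 x0 _ => a x.
  by rewrite -(ler_pXn2r (n := 2)) ?nnegrE ?sqrtr_ge0 // sqr_sqrtr.
have E_ge0 : 0 <= E by apply: le_trans (dev_le (a0, x0)).
by rewrite -(ger0_norm E_ge0) -sqrtr_sqr ltr_sqrt // (le_lt_trans M_ge0).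
Qed.

Lemma orthogonal_of_optimal : (forall f, H f -> max_dev F fs <= max_dev F f) ->
  exists k : nat, (1 <= k <= n.+1)%N /\
    exists (a : 'I_k -> A) (x : 'I_k -> X) (lam : 'I_k -> R),
      [/\ forall i, 0 < lam i,
          \sum_(i < k) lam i = 1,
          (forall f, H f ->
             \sum_(i < k) lam i * ip (F (a i) (x i) - fs (x i)) (f (x i)) = 0)
        & forall i,
            `|F (a i) (x i) - fs (x i)| = unorm (fun y => F (a i) y - fs y) /\
            unorm (fun y => F (a i) y - fs y) = max_dev F fs].
Proof.
move=> fs_optimal.
pose v p j := ip (dev p) (b j p.2).
have v_cont j : continuous (v ^~ j) by apply: continuous_ip_dev; exact: b_continuous.
have [[w w_gt0 w_ascent]|[lam [p [lam_ge0 lam1 pK lam_v]]]] :=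
  hull_zero_or_separated extremal_compact extremal_nonempty v_cont.
  have Hg : H (fun x => \sum_j w j *: b j x) by rewrite H_span; exists w.
  have [|f Hf] := max_dev_descent Hg w_gt0.
    by move=> p Kp; rewrite (ip_sumr ip_inner); exact: w_ascent.
  by rewrite ltNge fs_optimal.
have [k [s [k_range lam_s_gt0 reindex]]] := reindex_positive_weights lam_ge0 lam1.
exists k; split => //; exists (fun i => (p (s i)).1), (fun i => (p (s i)).2).
exists (fun i => lam (s i)); split => // [||i].
- move: (reindex (fun=> 1)); under eq_bigr do rewrite mulr1.
  by move=> ->; under eq_bigr do rewrite mulr1.
- move=> f; rewrite H_span => -[c ->].
  rewrite (reindex (fun i => ip (dev (p i)) (\sum_j c j *: b j (p i).2))).
  under eq_bigr do rewrite (ip_sumr ip_inner) mulr_sumr.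
  rewrite exchange_big big1 // => j _.
  rewrite (eq_bigr (fun i => c j * (lam i * v (p i) j))) => [|i _].
    by rewrite -mulr_sumr lam_v mulr0.
  by rewrite /v mulrCA.
- exact: extremal_attains (pK (s i)).
Qed.

End BestApproximation.

Theorem corollary3 (R : realType) (X : topologicalType) (Y : normedModType R)
  (ip : Y -> Y -> R) (H : set (X -> Y)) (n : nat) (A : topologicalType)
  (F : A -> X -> Y) (fs : X -> Y) :
  compact [set: X] -> hausdorff_space X ->
  is_inner_product ip ->
  (1 <= n)%N -> subspace_of_dim H n ->
  compact [set: A] -> hausdorff_space A -> [set: A] !=set0 ->
  unif_continuous_family F ->
  H fs ->
  (forall f, H f -> max_dev F fs <= max_dev F f) <->
  exists k : nat, (1 <= k <= n.+1)%N /\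
    exists (a : 'I_k -> A) (x : 'I_k -> X) (lam : 'I_k -> R),
      [/\ forall i, 0 < lam i,
          \sum_(i < k) lam i = 1,
          (forall f, H f ->
             \sum_(i < k) lam i * ip (F (a i) (x i) - fs (x i)) (f (x i)) = 0)
        & forall i,
            `|F (a i) (x i) - fs (x i)| = unorm (fun y => F (a i) y - fs y) /\
            unorm (fun y => F (a i) y - fs y) = max_dev F fs].
Proof.
move=> X_compact _ ip_inner n_gt0 [b [b_cont b_free H_span]] A_compact _ [a0 _]
  F_cont fs_in_H.
have [x0 _] := free_family_domain_nonempty n_gt0 b_free.
split; first exact: orthogonal_of_optimal a0 x0 X_compact A_compact ip_inner
  F_cont b_cont H_span fs_in_H.
move=> [k [/andP[k_gt0 _] [a [x [lam [lam_gt0 _ orthogonal attains]]]]]].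
have := le_max_dev_of_orthogonal x0 X_compact A_compact ip_inner F_cont
  b_cont H_span fs_in_H k_gt0 lam_gt0 orthogonal; apply=> i.
by have [-> ->] := attains i.
Qed.
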